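(* For every $n\ge1$, the map $S\mapsto[\mathrm{D}(S),\mathrm{E}(S)]$ is a bijection from the set $\mathcal{S}_n$ of sticky trees with $n$ edges onto the set of intervals of the Tamari lattice of order $n$.
   Context: Sticky trees: a plane tree is a rooted tree in which the children of every node are linearly ordered (left to right). The root has depth $0$, a child of a node of depth $d$ has depth $d+1$. The prefix order is: the root, followed by the prefix order of the subtree of its leftmost child, then of its second child, and so on. $S_u$ denotes the subtree rooted at $u$. A sticky tree is a plane tree $S$ with node set $V$ and a labeling $\ell:V\to\mathbb{N}$ such that: (1) every node $u$ of depth $d$ has $0\le\ell(u)\le d$; (2) every node $u$ of depth $d>0$ has some $v\in S_u$ (possibly $v=u$) with $\ell(v)<d$; (3) for every node $u$ of depth $d$, if some $v\in S_u$ has $\ell(v)=d$, then every node of $S_u$ (including $u$) preceding $v$ in prefix order has label at least $d$. The certificate of a non-root node $u$ of depth $d$ is the first node, in prefix order, of $S_u$ whose label is $<d$. The certificate-counting function $c:V\to\mathbb{N}$ assigns to each node $w$ the number of non-root nodes whose certificate is $w$. The words: $\mathrm{E}(S)$ is the word in $\{u,d\}$ obtained by the depth-first traversal of $S$ from the root visiting children left to right, writing $u$ for each move from a node to a child and $d$ for each move back to the parent. If $v_1,\dots,v_n$ are the non-root nodes of $S$ in prefix order, $\mathrm{D}(S)=u\,d^{c(v_1)}\,u\,d^{c(v_2)}\cdots u\,d^{c(v_n)}$. Dyck paths and Tamari lattice: a Dyck path of length $2n$ is a word in $\{u,d\}$ with $n$ letters $u$ and $n$ letters $d$ such that every prefix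 has at least as many $u$'s as $d$'s. The $i$-th letter $u$ of a Dyck path $D$ is matched with the letter $d$ following it such that the factor strictly between them is balanced; $\ell_D(i)$ is the length of that factor. $D\preceq_T E$ iff $\ell_D(i)\le\ell_E(i)$ for all $1\le i\le n$ (Tamari lattice of order $n$); a Tamari interval is a pair $[D,E]$ of Dyck paths of length $2n$ with $D\preceq_T E$. *)

From mathcomp Require Import all_boot.
Set Implicit Arguments. Unset Strict Implicit. Unset Printing Implicit Defensive.

(* A node carries its label and the ordered (left to right) list of its children. *)
Inductive ltree := LNode of nat & seq ltree.

Fixpoint tsize (t : ltree) : nat :=
  let: LNode _ ts := t in (sumn (map tsize ts)).+1.

Definition edges (t : ltree) : nat := (tsize t).-1.

(* Prefix-order list of nodes of a tree whose root has depth d: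
   each node is recorded as (depth, label, size of its subtree).
   The subtree S_u of the node of (global) prefix index i is the
   contiguous segment of indices i, ..., i + size - 1. *)
Fixpoint pre (d : nat) (t : ltree) : seq (nat * nat * nat) :=
  let: LNode l ts := t in (d, l, tsize t) :: flatten (map (pre d.+1) ts).

Section Nodes.
Variable S : ltree.
Definition nodesS := pre 0 S.
Definition nnodes := size nodesS.
Definition dep (i : nat) : nat := (nth (0,0,0) nodesS i).1.1.
Definition lab (i : nat) : nat := (nth (0,0,0) nodesS i).1.2.
Definition ssz (i : nat) : nat := (nth (0,0,0) nodesS i).2.
Definition sublabels (i : nat) : seq nat :=
  [seq x.1.2 | x <- take (ssz i) (drop i nodesS)].
End Nodes.

Definition sticky (S : ltree) : Prop :=
  (forall i, i < nnodes S -> lab S i <= dep S i) /\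
  (forall i, 0 < i < nnodes S -> has (fun l => l < dep S i) (sublabels S i)) /\
  (forall i, i < nnodes S -> forall j, j < size (sublabels S i) ->
     nth 0 (sublabels S i) j = dep S i ->
     all (fun l => dep S i <= l) (take j (sublabels S i))).

(* certificate (as a global prefix index) of the non-root node i:
   first node of S_i in prefix order with label < depth of i *)
Definition cert (S : ltree) (i : nat) : nat :=
  i + find (fun l => l < dep S i) (sublabels S i).

Definition ccount (S : ltree) (w : nat) : nat :=
  count (fun i => cert S i == w) (iota 1 (nnodes S).-1).

Definition u_ : bool := true.
Definition d_ : bool := false.

Fixpoint Ew (t : ltree) : seq bool :=
  let: LNode _ ts := t in flatten (map (fun s => u_ :: rcons (Ew s) d_) ts).

Definition Dw (S : ltree) : seq bool :=
  flatten [seq u_ :: nseq (ccount S v) d_ | v <- iota 1 (nnodes S).-1].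

Definition nups (w : seq bool) := count (fun b => b == u_) w.
Definition ndowns (w : seq bool) := count (fun b => b == d_) w.

Definition prefix_ok (w : seq bool) : bool :=
  all (fun k => ndowns (take k w) <= nups (take k w)) (iota 0 (size w).+1).

Definition balanced (w : seq bool) : bool := (nups w == ndowns w) && prefix_ok w.

Definition dyck (n : nat) (w : seq bool) : bool :=
  [&& size w == 2 * n, nups w == n & prefix_ok w].

(* position (0-based) of the i-th letter u (i counted from 1) *)
Definition pos_up (w : seq bool) (i : nat) : nat :=
  nth 0 [seq j <- iota 0 (size w) | nth d_ w j == u_] i.-1.

(* ell_w(i): length of the (balanced) factor strictly between the i-th u and
   its matching d *)
Definition ell (w : seq bool) (i : nat) : nat :=
  let p := pos_up w i in
  find (fun k => balanced (take k (drop p.+1 w)) && (nth u_ w (p.+1 + k) == d_))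
       (iota 0 (size w)).

Definition tamari_le (n : nat) (P Q : seq bool) : Prop :=
  forall i, 1 <= i <= n -> ell P i <= ell Q i.

(* The certificates of a sticky tree [S] form a system of
   non-crossing arcs [[i, cert i]], and [D(S)] is the Dyck word of this arc
   system: its [i]-th up step is matched after [2 (cert i - i)] letters, while in
   [E(S)] it is matched after [2 (|S_i| - 1)] letters.  As [cert i] lies in the
   subtree [S_i], [D(S) <= E(S)] in the Tamari order; conversely the Tamari
   inequality says exactly that each arc of [D] ends inside the corresponding
   subtree of the tree traversed by [E].  In a sticky tree the labels are forced
   by the shape and the arcs: the label of [w] is the largest depth of a node
   [v <= w] whose certificate comes after [w].  This gives injectivity, and
   labelling the tree of [E] in this way from the arcs of [D] yields a sticky
   tree with [D(S) = D], which gives surjectivity. *)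

From mathcomp Require Import all_boot zify.
From Stdlib Require Lists.List.
Set Implicit Arguments. Unset Strict Implicit. Unset Printing Implicit Defensive.

Arguments nups : simpl never.
Arguments ndowns : simpl never.

(** * Balanced words *)

Lemma nups_cat a b : nups (a ++ b) = nups a + nups b.
Proof. by rewrite /nups count_cat. Qed.

Lemma ndowns_cat a b : ndowns (a ++ b) = ndowns a + ndowns b.
Proof. by rewrite /ndowns count_cat. Qed.

Lemma nups_cons x a : nups (x :: a) = (x == u_) + nups a.
Proof. by []. Qed.

Lemma ndowns_cons x a : ndowns (x :: a) = (x == d_) + ndowns a.
Proof. by []. Qed.

Lemma size_nups_ndowns a : size a = nups a + ndowns a.
Proof. by elim: a => // x a IH; rewrite nups_cons ndowns_cons /= IH; case: x => /=; lia. Qed.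

Lemma prefix_okP w :
  reflect (forall k, ndowns (take k w) <= nups (take k w)) (prefix_ok w).
Proof.
apply: (iffP allP) => [H k | H k _]; last exact: H.
have [hk|hk] := leqP k (size w); first by apply: H; rewrite mem_iota; lia.
by rewrite take_oversize ?(ltnW hk) //; have := H (size w); rewrite take_size mem_iota; apply; lia.
Qed.

(* [walk h h' w]: read as a lattice path (u = +1, d = -1), [w] goes from height
   [h] to height [h'] without going below 0. *)
Fixpoint walk (h h' : nat) (w : seq bool) : bool :=
  if w is b :: w' then
    if b then walk h.+1 h' w' else (0 < h) && walk h.-1 h' w'
  else h == h'.

Lemma walkP h h' w : walk h h' w <->
  nups w + h = ndowns w + h' /\ forall k, ndowns (take k w) <= h + nups (take k w).
Proof.
elim: w h => [|b w IH] h.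
  split=> [/eqP->|[e _]]; last by apply/eqP; move: e; rewrite /nups /ndowns /=; lia.
  by split=> // k; rewrite take_nil.
have takeS k : take k.+1 (b :: w) = b :: take k w by [].
rewrite /= nups_cons ndowns_cons.
case: b takeS => takeS /=.
- rewrite IH; split=> -[e H]; (split; first lia).
    by case=> [|k]; [rewrite take0 | rewrite takeS nups_cons ndowns_cons /=; have := H k; lia].
  by move=> k; have := H k.+1; rewrite takeS nups_cons ndowns_cons /=; lia.
split=> [/andP[h0 /IH[e H]]|[e H]].
  split=> [|[|k]]; first lia; first by rewrite take0.
  by rewrite takeS nups_cons ndowns_cons /=; have := H k; lia.
have h0 : 0 < h by have := H 1; rewrite /= take0 /nups /ndowns /=; lia.
rewrite h0; apply/IH; split=> [|k]; first lia.
by have := H k.+1; rewrite takeS nups_cons ndowns_cons /=; lia.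
Qed.

Lemma balanced_walk w : balanced w <-> walk 0 0 w.
Proof.
rewrite walkP /balanced; split=> [/andP[/eqP e /prefix_okP H]|[e H]].
  by split=> [|k]; [lia | exact: H].
by rewrite (_ : nups w = ndowns w) ?eqxx /=; [apply/prefix_okP | lia].
Qed.

Lemma walk_cat h1 h2 h3 a b : walk h1 h2 a -> walk h2 h3 b -> walk h1 h3 (a ++ b).
Proof.
elim: a h1 => [|[] a IH] h1 /=; first by move/eqP->.
  exact: IH.
by case/andP=> -> /IH H /H.
Qed.

Lemma walk_shift c h h' a : walk h h' a -> walk (h + c) (h' + c) a.
Proof.
elim: a h => [|[] a IH] h /=; first by move/eqP->.
  exact: IH.
by case/andP=> h0 /IH; rewrite addn_gt0 h0 (_ : (h + c).-1 = h.-1 + c) //; lia.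
Qed.

Lemma balanced_first_return a b :
  balanced a -> balanced b -> balanced (u_ :: a ++ d_ :: b).
Proof. by rewrite !balanced_walk => wa wb; apply: walk_cat (walk_shift 1 wa) _. Qed.

Lemma size_balanced w : balanced w -> size w = 2 * nups w.
Proof. by case/andP=> /eqP e _; rewrite size_nups_ndowns -e; lia. Qed.

Lemma balanced_prefix_before_d x j :
  balanced x -> j < size x -> balanced (take j x) -> nth u_ x j != d_.
Proof.
case/andP=> _ /prefix_okP px hj /andP[/eqP ej _]; apply/eqP=> hd.
have := px j.+1; rewrite (take_nth u_ hj) -cats1 nups_cat ndowns_cat hd ej.
by rewrite /nups /ndowns /=; lia.
Qed.

(* The first letter [d] following a balanced prefix marks the first return to
   height -1, so the prefix is unique. *)
Lemma balanced_cat_d_inj x1 x2 r1 r2 : balanced x1 -> balanced x2 ->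
  x1 ++ d_ :: r1 = x2 ++ d_ :: r2 -> x1 = x2.
Proof.
wlog le12 : x1 x2 r1 r2 / size x1 <= size x2.
  move=> W b1 b2 e; have [h|h] := leqP (size x1) (size x2); first exact: W e.
  by symmetry; apply: (W x2 x1 r2 r1) => //; apply: ltnW.
move=> b1 b2 e; have etake := congr1 (take (size x1)) e.
rewrite !take_cat ltnn subnn take0 cats0 in etake.
have [lt12|gt12|eq12] := ltngtP (size x1) (size x2); first last.
- by rewrite eq12 ltnn subnn take0 cats0 in etake.
- by rewrite ltnNge le12 in gt12.
rewrite lt12 in etake.
have := balanced_prefix_before_d b2 lt12; rewrite -etake => /(_ b1).
by have := congr1 (nth u_ ^~ (size x1)) e; rewrite !nth_cat lt12 ltnn subnn /= => <-.
Qed.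

Lemma find_nth_eq (T : Type) (x0 : T) (p : pred T) s k : k < size s ->
  p (nth x0 s k) -> (forall j, j < k -> ~~ p (nth x0 s j)) -> find p s = k.
Proof.
move=> hk pk hb; have hs : has p s by apply/(has_nthP x0); exists k.
have [h|h|//] := ltngtP (find p s) k.
- by have := hb _ h; rewrite (nth_find x0 hs).
- by have := before_find x0 h; rewrite pk.
Qed.

Lemma pos_up_cat A R : pos_up (A ++ u_ :: R) (nups A).+1 = size A.
Proof.
rewrite /pos_up size_cat iotaD filter_cat /=.
have -> : [seq j <- iota 0 (size A) | nth d_ (A ++ u_ :: R) j == u_] =
          [seq j <- iota 0 (size A) | nth d_ A j == u_].
  by apply: eq_in_filter => j; rewrite mem_iota => /andP[_ hj]; rewrite nth_cat hj.
have hsize : size [seq j <- iota 0 (size A) | nth d_ A j == u_] = nups A.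
  rewrite size_filter /nups -(count_map (nth d_ A) (fun b => b == u_)).
  by rewrite map_nth_iota0 // take_size.
by rewrite nth_cat hsize ltnn subnn add0n nth_cat ltnn subnn.
Qed.

Lemma ell_cat A X B : balanced X -> ell (A ++ u_ :: X ++ d_ :: B) (nups A).+1 = size X.
Proof.
move=> bX.
have nthX k : nth u_ (A ++ u_ :: X ++ d_ :: B) ((size A).+1 + k) = nth u_ (X ++ d_ :: B) k.
  rewrite nth_cat ifF; last by apply/negbTE; lia.
  by rewrite (_ : (size A).+1 + k - size A = k.+1) //; lia.
have hdrop : drop (size A).+1 (A ++ u_ :: X ++ d_ :: B) = X ++ d_ :: B.
  by rewrite -cat_rcons drop_cat size_rcons ltnn subnn drop0.
rewrite /ell pos_up_cat hdrop.
have hX : size X < size (A ++ u_ :: X ++ d_ :: B) by rewrite size_cat /= size_cat /=; lia.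
apply: (@find_nth_eq nat 0) => [|| j hj]; first by rewrite size_iota.
  by rewrite nth_iota // add0n take_cat ltnn subnn take0 cats0 bX nthX nth_cat ltnn subnn.
rewrite nth_iota ?add0n; last lia.
rewrite nthX take_cat nth_cat hj; apply/negP=> /andP[bj /eqP hd].
by have := balanced_prefix_before_d bX hj bj; rewrite hd.
Qed.

Lemma walk_first_descent w h : walk h.+1 0 w ->
  exists X Y, [/\ w = X ++ d_ :: Y, walk 0 0 X & walk h 0 Y].
Proof.
elim: {w}(size w) {-2}w (leqnn (size w)) h => [|N IHN] [|[] w] //= hs h.
  move=> /(IHN w hs h.+1) [X1 [Y1 [eX1 o1 o2]]].
  have hY1 : size Y1 <= N by move: hs; rewrite eX1 size_cat /=; lia.
  have [X2 [Y2 [eY1 o3 o4]]] := IHN Y1 hY1 h o2; rewrite eX1 eY1.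
  exists (u_ :: X1 ++ d_ :: X2), Y2; split=> //; first by rewrite /= -catA.
  exact: walk_cat (walk_shift 1 o1) (o3 : walk 1 0 (d_ :: X2)).
by move=> o; exists [::], w.
Qed.

Lemma first_return w : balanced w -> w != [::] ->
  exists X Y, [/\ w = u_ :: X ++ d_ :: Y, balanced X & balanced Y].
Proof.
rewrite balanced_walk; case: w => [|[] w] //= /walk_first_descent[X [Y [-> o1 o2]]] _.
by exists X, Y; split; rewrite ?balanced_walk.
Qed.

Lemma balanced_ind (P : seq bool -> Prop) : P [::] ->
  (forall X Y, balanced X -> balanced Y -> P X -> P Y -> P (u_ :: X ++ d_ :: Y)) ->
  forall w, balanced w -> P w.
Proof.
move=> P0 PS w; elim: {w}(size w) {-2}w (leqnn (size w)) => [|N IHN] w.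
  by case: w.
move=> hs bw; have [->//|nw] := eqVneq w [::].
have [X [Y [e bX bY]]] := first_return bw nw.
by rewrite e in hs *; apply: PS => //; apply: IHN => //; rewrite /= size_cat /= in hs; lia.
Qed.

(** * Words of non-crossing arc systems *)

Definition blocks (f : nat -> nat) (s : seq nat) : seq bool :=
  flatten [seq u_ :: nseq (f v) d_ | v <- s].

Definition mcount (m : nat -> nat) (a b v : nat) : nat :=
  count (fun i => m i == v) (iota a (b - a)).

(* [arc_word m a b] is [u d^c(a) u d^c(a+1) ... u d^c(b-1)], where [c(v)]
   counts the [i] in [[a, b)] with [m i = v]; thus [D(S)] is the arc word of
   the certificate map. *)
Definition arc_word (m : nat -> nat) (a b : nat) : seq bool :=
  blocks (mcount m a b) (iota a (b - a)).

(* The arcs [[i, m i]], [a <= i < b], stay in [[a, b)] and do not cross. *)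
Definition nested_map (m : nat -> nat) (a b : nat) : Prop :=
  forall i, a <= i < b -> i <= m i < b /\ forall j, i < j <= m i -> m j <= m i.

Lemma blocks_cat f s1 s2 : blocks f (s1 ++ s2) = blocks f s1 ++ blocks f s2.
Proof. by rewrite /blocks map_cat flatten_cat. Qed.

Lemma blocks_cons f v s : blocks f (v :: s) = u_ :: nseq (f v) d_ ++ blocks f s.
Proof. by []. Qed.

Lemma eq_in_blocks f g s : {in s, f =1 g} -> blocks f s = blocks g s.
Proof. by move=> e; congr flatten; apply/eq_in_map => v /e ->. Qed.

Lemma nups_blocks f s : nups (blocks f s) = size s.
Proof.
elim: s => // v s IH; rewrite blocks_cons nups_cons nups_cat IH /=.
by rewrite (_ : nups (nseq (f v) d_) = 0) //; elim: (f v).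
Qed.

Lemma blocks_rcons_bump f (s : seq nat) (c : nat) : c \notin s ->
  blocks (fun v => f v + (v == c)) (rcons s c) = blocks f (rcons s c) ++ [:: d_].
Proof.
move=> cs; rewrite -!cats1 !blocks_cat (@eq_in_blocks _ f) => [|v vs]; last first.
  by rewrite (_ : (v == c) = false) ?addn0 //; apply: contraNF cs => /eqP <-.
by rewrite /blocks /= eqxx addn1 !cats0 -catA; congr (_ ++ _ :: _); elim: (f c) => //= k ->.
Qed.

Lemma mcount_cat m a p b v : a <= p <= b ->
  mcount m a b v = mcount m a p v + mcount m p b v.
Proof.
move=> /andP[ap pb]; rewrite /mcount -count_cat (_ : b - a = p - a + (b - p)); last lia.
by rewrite iotaD subnKC.
Qed.

Lemma mcount_eq0 m a b v : (forall i, a <= i < b -> m i != v) -> mcount m a b v = 0.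
Proof.
move=> H; apply/eqP; rewrite -leqn0 leqNgt -has_count; apply/hasPn => i.
by rewrite mem_iota => hi; apply: H; lia.
Qed.

Lemma eq_arc_word m m' a b : (forall i, a <= i < b -> m i = m' i) ->
  arc_word m a b = arc_word m' a b.
Proof.
move=> H; apply: eq_in_blocks => v _; apply: eq_in_count => i.
by rewrite mem_iota => hi; rewrite H //; lia.
Qed.

Lemma arc_word_nil m a b : b <= a -> arc_word m a b = [::].
Proof. by move=> h; rewrite /arc_word (_ : b - a = 0) //; lia. Qed.

Lemma nups_arc_word m a b : nups (arc_word m a b) = b - a.
Proof. by rewrite nups_blocks size_iota. Qed.

Lemma nested_map_suffix m a a' b : nested_map m a b -> a <= a' -> nested_map m a' b.
Proof. by move=> nest aa' i hi; apply: nest; lia. Qed.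

Section NestedMap.
Variables (m : nat -> nat) (a b : nat).
Hypothesis nest : nested_map m a b.
Hypothesis ab : a < b.

Let nest_a : a <= m a < b /\ forall j, a < j <= m a -> m j <= m a.
Proof. by apply: nest; rewrite leqnn ab. Qed.

Lemma nested_map_inner : nested_map m a.+1 (m a).+1.
Proof.
move=> i hi; have [_ ma] := nest_a; have /nest[/andP[ii _] mi] : a <= i < b by lia.
by split=> //; have := ma i; lia.
Qed.

Lemma nested_map_outer : nested_map m (m a).+1 b.
Proof. by move=> i hi; apply: nest; have := nest_a; lia. Qed.

Lemma mcount_beyond_arc v : m a < v -> mcount m a b v = mcount m (m a).+1 b v.
Proof.
have [/andP[ac cb] ma] := nest_a; move=> cv; rewrite (@mcount_cat _ _ (m a).+1); last lia.
rewrite [mcount m a _ v]mcount_eq0 // => i hi.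
have [ai|<-] : a < i \/ a = i by lia.
  by have := ma i; lia.
lia.
Qed.

Lemma mcount_under_arc v : v <= m a -> mcount m a b v = (v == m a) + mcount m a.+1 (m a).+1 v.
Proof.
have [/andP[ac cb] _] := nest_a; move=> vc.
rewrite (@mcount_cat _ _ a.+1) ?(@mcount_cat _ a.+1 (m a).+1 b); try lia.
rewrite [mcount m (m a).+1 b v]mcount_eq0 => [|i hi]; last first.
  have /nest[/andP[im _] _] : a <= i < b by lia.
  lia.
by rewrite addn0 [mcount m a a.+1 v]/mcount subSnn /= addn0 eq_sym.
Qed.

Lemma arc_word_first_return :
  arc_word m a b = u_ :: arc_word m a.+1 (m a).+1 ++ d_ :: arc_word m (m a).+1 b.
Proof.
have [/andP[ac cb] _] := nest_a.
have cnt_a : mcount m a.+1 (m a).+1 a = 0.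
  apply: mcount_eq0 => i hi; have /nest[/andP[im _] _] : a <= i < b by lia.
  lia.
have split_iota : iota a (b - a) = a :: iota a.+1 (m a - a) ++ iota (m a).+1 (b - (m a).+1).
  rewrite (_ : b - a = (m a - a + (b - (m a).+1)).+1) /=; last lia.
  by rewrite iotaD (_ : a.+1 + (m a - a) = (m a).+1) //; lia.
rewrite /arc_word split_iota blocks_cons blocks_cat mcount_under_arc ?cnt_a // addn0.
rewrite [blocks _ (iota (m a).+1 _)](eq_in_blocks (g := mcount m (m a).+1 b)) => [|v]; last first.
  by rewrite mem_iota => hv; apply: mcount_beyond_arc; lia.
rewrite (eq_in_blocks (g := fun v => mcount m a.+1 (m a).+1 v + (v == m a))) => [|v]; last first.
  by rewrite mem_iota => hv; rewrite mcount_under_arc; [exact: addnC | lia].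
rewrite subSS; have [ltac|eqac] := ltnP a (m a); last first.
  have eac : a = m a by lia.
  by rewrite -eac eqxx subnn.
rewrite (_ : a == m a = false) /=; last by apply/negbTE; lia.
rewrite (_ : iota a.+1 (m a - a) = rcons (iota a.+1 (m a - a.+1)) (m a)); last first.
  rewrite -cats1 (_ : m a - a = m a - a.+1 + 1); last lia.
  by rewrite iotaD (_ : a.+1 + (m a - a.+1) = m a) //; lia.
by rewrite blocks_rcons_bump ?mem_iota -?catA //; lia.
Qed.

End NestedMap.

Lemma arc_word_balanced m a b : nested_map m a b -> balanced (arc_word m a b).
Proof.
elim: {a b}(b - a) {-2}a {-2}b (leqnn (b - a)) => [|k IH] a b hk nest.
  by rewrite arc_word_nil //; lia.
have [ba|ab] := leqP b a; first by rewrite arc_word_nil.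
have /nest[/andP[ac cb] _] : a <= a < b by lia.
rewrite arc_word_first_return //; apply: balanced_first_return; apply: IH.
- lia.
- exact: nested_map_inner nest ab.
- lia.
- exact: nested_map_outer nest ab.
Qed.

Lemma arc_word_decomposition m a b i : nested_map m a b -> a <= i < b ->
  exists A B, arc_word m a b = A ++ u_ :: arc_word m i.+1 (m i).+1 ++ d_ :: B /\
              nups A = i - a.
Proof.
elim: {a b}(b - a) {-2}a {-2}b (leqnn (b - a)) => [|k IH] a b hk nest hi; first lia.
have ab : a < b by lia.
have /nest[/andP[ac cb] _] : a <= a < b by lia.
rewrite arc_word_first_return //.
have [ia|ai|<-] := ltngtP i a; first lia; last first.
  by exists [::], (arc_word m (m i).+1 b); rewrite subnn.
have [im|mi] := leqP i (m a).
  have hk1 : (m a).+1 - a.+1 <= k by lia.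
  have hi1 : a.+1 <= i < (m a).+1 by lia.
  have [A [B [-> nA]]] := IH _ _ hk1 (nested_map_inner nest ab) hi1.
  exists (u_ :: A), (B ++ d_ :: arc_word m (m a).+1 b).
  by rewrite nups_cons nA /= -!catA /= -!catA; split=> //; lia.
have hk2 : b - (m a).+1 <= k by lia.
have hi2 : (m a).+1 <= i < b by lia.
have [A [B [-> nA]]] := IH _ _ hk2 (nested_map_outer nest ab) hi2.
exists (u_ :: arc_word m a.+1 (m a).+1 ++ d_ :: A), B; rewrite /= -catA.
by rewrite nups_cons nups_cat nups_cons nA nups_arc_word /=; split=> //; lia.
Qed.

Lemma ell_arc_word m a b i : nested_map m a b -> a <= i < b ->
  ell (arc_word m a b) (i - a).+1 = 2 * (m i - i).
Proof.
move=> nest hi; have [A [B [-> <-]]] := arc_word_decomposition nest hi.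
have [/andP[im mb] _] := nest i hi.
have nest_i : nested_map m i.+1 (m i).+1.
  by apply: nested_map_inner; [apply: nested_map_suffix nest _ | ]; lia.
by rewrite ell_cat ?size_balanced ?nups_arc_word //; exact: arc_word_balanced.
Qed.

Lemma ell_arc_word1 m b i : nested_map m 1 b -> 0 < i < b ->
  ell (arc_word m 1 b) i = 2 * (m i - i).
Proof. by move=> nest hi; rewrite -[in ell _ i](@subnK 1 i) ?addn1 ?ell_arc_word //; lia. Qed.

(* [m i] is the index of the block containing the down step matched with the
   [i]-th up step. *)
Lemma balanced_arc_word w : balanced w -> forall a, exists m,
  nested_map m a (a + nups w) /\ w = arc_word m a (a + nups w).
Proof.
move: w; apply: (balanced_ind (P := fun w => forall a, exists m,
  nested_map m a (a + nups w) /\ w = arc_word m a (a + nups w))) => [a|X Y _ _ IHX IHY a].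
  by exists id; rewrite /nups /= addn0 arc_word_nil //; split=> // i; lia.
have [m1 [nest1 eX]] := IHX a.+1; move def_c : (a + nups X) => c.
have ec : a.+1 + nups X = c.+1 by lia.
rewrite ec in nest1 eX; have [m2 [nest2 eY]] := IHY c.+1.
pose m i := if i == a then c else if i <= c then m1 i else m2 i.
have m_a : m a = c by rewrite /m eqxx.
have m_in i : a < i <= c -> m i = m1 i.
  by move=> hi; rewrite /m; case: eqP => [|_]; [lia | case: leqP => //; lia].
have m_out i : c < i -> m i = m2 i.
  by move=> hi; rewrite /m; case: eqP => [|_]; [lia | case: leqP => //; lia].
have -> : a + nups (u_ :: X ++ d_ :: Y) = c.+1 + nups Y.
  by rewrite nups_cons nups_cat nups_cons /=; lia.
have nest : nested_map m a (c.+1 + nups Y).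
  move=> i hi; have [->|ia] := eqVneq i a.
    rewrite m_a; split=> [|j hj]; first lia.
    have /nest1[/andP[_ jc] _] : a.+1 <= j < c.+1 by lia.
    by rewrite m_in; lia.
  have [ic|ci] := leqP i c.
    have /nest1[/andP[im ic'] H] : a.+1 <= i < c.+1 by lia.
    by rewrite m_in; [split=> [|j hj]; [lia | rewrite m_in; [apply: H|]] | ]; lia.
  have /nest2[/andP[im ic'] H] : c.+1 <= i < c.+1 + nups Y by lia.
  by rewrite m_out //; split=> [|j hj]; [lia | rewrite m_out; [apply: H|]]; lia.
exists m; split=> //; rewrite arc_word_first_return //; last lia.
rewrite m_a; congr (_ :: _ ++ _ :: _).
  by rewrite {1}eX; apply: eq_arc_word => i hi; rewrite m_in //; lia.
by rewrite {1}eY; apply: eq_arc_word => i hi; rewrite m_out //; lia.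
Qed.

(** * Plane trees *)

Definition ltree_nested_ind (P : ltree -> Prop)
    (H : forall l ts, List.Forall P ts -> P (LNode l ts)) : forall t, P t :=
  fix F t := let: LNode l ts := t in
    H l ts ((fix G ts : List.Forall P ts :=
      match ts with
      | [::] => List.Forall_nil P
      | s :: ts' => @List.Forall_cons _ P s ts' (F s) (G ts')
      end) ts).

Definition pre_forest (d : nat) (ts : seq ltree) := flatten (map (pre d) ts).
Definition Ew_forest (ts : seq ltree) := flatten [seq u_ :: rcons (Ew s) d_ | s <- ts].
Definition root_label (t : ltree) := let: LNode l _ := t in l.

Definition node0 : nat * nat * nat := (0, 0, 0).
Definition pdep (L : seq (nat * nat * nat)) i := (nth node0 L i).1.1.
Definition psize (L : seq (nat * nat * nat)) i := (nth node0 L i).2.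

Lemma pre_node d l ts :
  pre d (LNode l ts) = (d, l, (sumn (map tsize ts)).+1) :: pre_forest d.+1 ts.
Proof. by []. Qed.

Lemma Ew_node l ts : Ew (LNode l ts) = Ew_forest ts.
Proof. by []. Qed.

Lemma tsize_gt0 t : 0 < tsize t.
Proof. by case: t. Qed.

Lemma pre_forest_cat d ts1 ts2 :
  pre_forest d (ts1 ++ ts2) = pre_forest d ts1 ++ pre_forest d ts2.
Proof. by rewrite /pre_forest map_cat flatten_cat. Qed.

Lemma Ew_forest_cat ts1 ts2 : Ew_forest (ts1 ++ ts2) = Ew_forest ts1 ++ Ew_forest ts2.
Proof. by rewrite /Ew_forest map_cat flatten_cat. Qed.

Lemma Ew_forest_cons s ts : Ew_forest (s :: ts) = u_ :: Ew s ++ d_ :: Ew_forest ts.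
Proof. by rewrite /Ew_forest /= -cats1 -catA. Qed.

Lemma size_pre d t : size (pre d t) = tsize t.
Proof.
elim/ltree_nested_ind: t d => l ts IH d; rewrite pre_node /=; congr _.+1.
by elim: IH => //= s {}ts Hs _ IHts; rewrite /pre_forest /= size_cat Hs IHts.
Qed.

Lemma size_pre_forest d ts : size (pre_forest d ts) = sumn (map tsize ts).
Proof. by elim: ts => //= s ts IH; rewrite /pre_forest /= size_cat size_pre -IH. Qed.

Lemma balanced_Ew t : balanced (Ew t).
Proof.
elim/ltree_nested_ind: t => l ts IH; rewrite Ew_node.
by elim: IH => // s {}ts Hs _ IHts; rewrite Ew_forest_cons; apply: balanced_first_return.
Qed.

Lemma nups_Ew t : nups (Ew t) = edges t.
Proof.
elim/ltree_nested_ind: t => l ts IH; rewrite Ew_node /edges /=.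
elim: IH => // s {}ts Hs _ IHts; rewrite Ew_forest_cons nups_cons nups_cat nups_cons Hs IHts.
by rewrite /edges /=; have := tsize_gt0 s; lia.
Qed.

Lemma nups_Ew_forest ts : nups (Ew_forest ts) = sumn (map tsize ts).
Proof.
elim: ts => // s ts IH; rewrite Ew_forest_cons nups_cons nups_cat nups_cons IH nups_Ew.
by rewrite /edges /=; have := tsize_gt0 s; lia.
Qed.

Lemma forest_index_split ts j : j < sumn (map tsize ts) -> exists ts1 s ts2,
  ts = ts1 ++ s :: ts2 /\ sumn (map tsize ts1) <= j < sumn (map tsize ts1) + tsize s.
Proof.
elim: ts j => [|s ts IH] j //= hj; have [js|sj] := ltnP j (tsize s).
  by exists [::], s, ts; split=> //=; lia.
have /IH[ts1 [s' [ts2 [-> h]]]] : j - tsize s < sumn (map tsize ts) by lia.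
by exists (s :: ts1), s', ts2; split=> //=; lia.
Qed.

Lemma subtree_at t d i : i < tsize t -> exists e t',
  [/\ i + tsize t' <= tsize t, take (tsize t') (drop i (pre d t)) = pre e t', d <= e,
      0 < i -> d < e &
      0 < i -> exists A B, Ew t = A ++ u_ :: Ew t' ++ d_ :: B /\ nups A = i.-1].
Proof.
elim/ltree_nested_ind: t d i => l ts IH d [|i] hi.
  by exists d, (LNode l ts); rewrite drop0 take_oversize ?size_pre.
rewrite /= ltnS in hi; have [ts1 [s [ts2 [ets hj]]]] := forest_index_split hi.
rewrite ets in IH; have IHs := List.Forall_inv (proj2 (proj1 (List.Forall_app _ _ _) IH)).
set o := sumn (map tsize ts1) in hj.
have hsz : tsize (LNode l ts) = o + tsize s + sumn (map tsize ts2) + 1.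
  by rewrite /= ets map_cat sumn_cat /=; lia.
have hdrop : drop i.+1 (pre d (LNode l ts)) = drop (i - o) (pre d.+1 s ++ pre_forest d.+1 ts2).
  rewrite pre_node ets pre_forest_cat /= drop_cat size_pre_forest -/o.
  by rewrite ltnNge (proj1 (andP hj)).
have hEw : Ew (LNode l ts) = Ew_forest ts1 ++ u_ :: Ew s ++ d_ :: Ew_forest ts2.
  by rewrite Ew_node ets Ew_forest_cat Ew_forest_cons.
have [io|oi] := posnP (i - o).
  exists d.+1, s; split=> //; first by rewrite hsz; lia.
    by rewrite hdrop io drop0 take_cat size_pre ltnn subnn take0 cats0.
  by exists (Ew_forest ts1), (Ew_forest ts2); rewrite hEw nups_Ew_forest -/o /=; split=> //; lia.
have [|e [t' [h1 h2 h3 h4 h5]]] := IHs d.+1 (i - o); first lia.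
exists e, t'; split=> [|||_|_]; first by rewrite hsz; lia.
- rewrite hdrop drop_cat size_pre ifT; last lia.
  by rewrite takel_cat ?h2 // size_drop size_pre; lia.
- by have := h4 oi; lia.
- by have := h4 oi; lia.
have [A [B [eA nA]]] := h5 oi.
exists (Ew_forest ts1 ++ u_ :: A), (B ++ d_ :: Ew_forest ts2).
by rewrite hEw eA -!catA /= -!catA nups_cat nups_cons nups_Ew_forest -/o nA /=; split=> //; lia.
Qed.

Lemma nth_take_pre L i e t : take (tsize t) (drop i L) = pre e t ->
  nth node0 L i = (e, root_label t, tsize t).
Proof.
move=> h; rewrite -[i]addn0 -nth_drop -(@nth_take (tsize t)) ?tsize_gt0 // h.
by case: t {h}.
Qed.

Lemma node_bounds t d i : i < tsize t ->
  [/\ i + psize (pre d t) i <= tsize t, 0 < psize (pre d t) i, d <= pdep (pre d t) i &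
      0 < i -> d < pdep (pre d t) i].
Proof.
move=> hi; have [e [t' [h1 /nth_take_pre h2 h3 h4 _]]] := subtree_at d hi.
by rewrite /psize /pdep h2 /=; split=> //; exact: tsize_gt0.
Qed.

Lemma subtree_nested t d i j : i < tsize t -> i < j < i + psize (pre d t) i ->
  j + psize (pre d t) j <= i + psize (pre d t) i /\ pdep (pre d t) i < pdep (pre d t) j.
Proof.
move=> hi; have [e [t' [h1 h2 _ _ _]]] := subtree_at d hi.
rewrite /psize /pdep (nth_take_pre h2) /= => hj.
have ej : nth node0 (pre d t) j = nth node0 (pre e t') (j - i).
  by rewrite -h2 nth_take; [rewrite nth_drop subnKC //; lia | lia].
have /(node_bounds e)[] : j - i < tsize t' by lia.
by rewrite ej /psize /pdep => k1 _ _ k4; have := k4; lia.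
Qed.

Lemma nth_pre_forest d l ts1 s ts2 k : k < tsize s ->
  nth node0 (pre d (LNode l (ts1 ++ s :: ts2))) ((sumn (map tsize ts1)).+1 + k) =
  nth node0 (pre d.+1 s) k.
Proof.
move=> hk; rewrite pre_node pre_forest_cat addSn /= nth_cat size_pre_forest ifF; last lia.
by rewrite addKn nth_cat size_pre hk.
Qed.

Lemma ancestor_at_depth t d w f : w < tsize t -> d <= f <= pdep (pre d t) w ->
  exists v, v <= w < v + psize (pre d t) v /\ pdep (pre d t) v = f.
Proof.
elim/ltree_nested_ind: t d w => l ts IH d w hw hf.
have [->|fd] := eqVneq f d; first by exists 0.
case: w hw hf => [|w] hw hf; first by move: hf; rewrite /pdep /=; lia.
rewrite /= ltnS in hw; have [ts1 [s [ts2 [ets hj]]]] := forest_index_split hw.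
rewrite ets in IH; have IHs := List.Forall_inv (proj2 (proj1 (List.Forall_app _ _ _) IH)).
set o := sumn (map tsize ts1) in hj.
have hk : w - o < tsize s by lia.
move: hf; rewrite /pdep ets (_ : w.+1 = o.+1 + (w - o)); last lia.
rewrite nth_pre_forest // => hf.
have [|v [hv ev]] := IHs d.+1 (w - o) hk; first by rewrite /pdep; move/eqP: fd; lia.
have hv' : v < tsize s by lia.
exists (o.+1 + v); rewrite /psize /pdep nth_pre_forest //; split=> //.
by move: hv; rewrite /psize; lia.
Qed.

Lemma relabel t d (f : nat -> nat) : exists t',
  [/\ Ew t' = Ew t, tsize t' = tsize t &
      forall i, i < tsize t ->
        nth node0 (pre d t') i = (pdep (pre d t) i, f i, psize (pre d t) i)].
Proof.
elim/ltree_nested_ind: t d f => l ts IH d f.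
have [ts' [e1 e2 e3]] : exists ts', [/\ Ew_forest ts' = Ew_forest ts,
    map tsize ts' = map tsize ts &
    forall i, i < sumn (map tsize ts) ->
      nth node0 (pre_forest d.+1 ts') i =
      (pdep (pre_forest d.+1 ts) i, f i.+1, psize (pre_forest d.+1 ts) i)].
  elim: IH f => [|s {}ts Hs _ IHts] f; first by exists [::].
  have [s' [e1 e2 e3]] := Hs d.+1 (fun i => f i.+1).
  have [ts' [f1 f2 f3]] := IHts (fun i => f (tsize s + i)).
  exists (s' :: ts'); split; first by rewrite !Ew_forest_cons e1 f1.
    by rewrite /= e2 f2.
  move=> i hi; rewrite /pdep /psize /pre_forest /= !nth_cat !size_pre e2.
  case: ifP => h; first by rewrite e3.
  rewrite f3 /=; last by move: hi h => /=; lia.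
  by rewrite addnS subnKC //; lia.
exists (LNode (f 0) ts'); split; rewrite ?Ew_node ?e1 //=; first by rewrite e2.
by case=> [|i] hi; rewrite /pdep /psize /= ?e2 // e3.
Qed.

Lemma Ew_forest_cons_inv s1 r1 ts2 : Ew_forest (s1 :: r1) = Ew_forest ts2 ->
  exists s2 r2, [/\ ts2 = s2 :: r2, Ew s1 = Ew s2 & Ew_forest r1 = Ew_forest r2].
Proof.
case: ts2 => [|s2 r2]; first by rewrite Ew_forest_cons.
rewrite !Ew_forest_cons => -[e]; have e1 := balanced_cat_d_inj (balanced_Ew s1) (balanced_Ew s2) e.
exists s2, r2; split=> //.
by move: e; rewrite e1 => /eqP; rewrite eqseq_cat // => /andP[_ /eqP[]].
Qed.

Lemma tsize_Ew s1 s2 : Ew s1 = Ew s2 -> tsize s1 = tsize s2.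
Proof.
move=> e; have := nups_Ew s1; rewrite e nups_Ew /edges.
by have := tsize_gt0 s1; have := tsize_gt0 s2; lia.
Qed.

Lemma Ew_pre_depths t1 t2 d : Ew t1 = Ew t2 ->
  [seq x.1.1 | x <- pre d t1] = [seq x.1.1 | x <- pre d t2].
Proof.
elim/ltree_nested_ind: t1 t2 d => l1 ts1 IH [l2 ts2] d; rewrite !Ew_node !pre_node => e /=.
congr (_ :: _).
elim: IH ts2 e => [|s1 r1 Hs _ IHr] ts2 e.
  by case: ts2 e => // s2 r2; rewrite Ew_forest_cons.
have [s2 [r2 [-> e1 e2]]] := Ew_forest_cons_inv e.
by rewrite /pre_forest /= !map_cat (Hs s2 d.+1 e1) (IHr r2 e2).
Qed.

Lemma Ew_labels_inj t1 t2 d : Ew t1 = Ew t2 ->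
  [seq x.1.2 | x <- pre d t1] = [seq x.1.2 | x <- pre d t2] -> t1 = t2.
Proof.
elim/ltree_nested_ind: t1 t2 d => l1 ts1 IH [l2 ts2] d.
rewrite !Ew_node !pre_node => e /= [-> ef]; congr LNode.
elim: IH ts2 e ef => [|s1 r1 Hs _ IHr] ts2 e ef.
  by case: ts2 e {ef} => // s2 r2; rewrite Ew_forest_cons.
have [s2 [r2 [ets e1 e2]]] := Ew_forest_cons_inv e; subst ts2.
move: ef; rewrite /pre_forest /= !map_cat => /eqP.
rewrite eqseq_cat ?size_map ?size_pre ?(tsize_Ew e1) // => /andP[/eqP h1 /eqP h2].
by rewrite (Hs s2 d.+1 e1 h1) (IHr r2 e2 h2).
Qed.

(** * Certificates of sticky trees *)

Lemma nnodesE S : nnodes S = tsize S.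
Proof. by rewrite /nnodes /nodesS size_pre. Qed.

Lemma dep_root S : dep S 0 = 0.
Proof. by case: S. Qed.

Lemma ssz_bounds S i : i < tsize S ->
  [/\ i + ssz S i <= tsize S, 0 < ssz S i & 0 < i -> 0 < dep S i].
Proof. by move=> hi; have [] := node_bounds 0 hi. Qed.

Lemma subtree_nestedS S i j : i < tsize S -> i < j < i + ssz S i ->
  j + ssz S j <= i + ssz S i /\ dep S i < dep S j.
Proof. exact: subtree_nested. Qed.

Lemma ancestor_at_depthS S w f : w < tsize S -> f <= dep S w ->
  exists v, v <= w < v + ssz S v /\ dep S v = f.
Proof. by move=> hw hf; apply: ancestor_at_depth. Qed.

Lemma ancestor_uniq S v i w : v < tsize S -> i < tsize S ->
  v <= w < v + ssz S v -> i <= w < i + ssz S i -> dep S v = dep S i -> v = i.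
Proof.
move=> hv hi hvw hiw e; have [vi|iv|//] := ltngtP v i.
  have /(subtree_nestedS hv)[_ lt] : v < i < v + ssz S v by lia.
  lia.
have /(subtree_nestedS hi)[_ lt] : i < v < i + ssz S i by lia.
lia.
Qed.

Lemma size_sublabels S i : i < tsize S -> size (sublabels S i) = ssz S i.
Proof.
move=> hi; have [h1 _ _] := ssz_bounds hi.
by rewrite /sublabels size_map size_take size_drop -/(nnodes S) nnodesE; case: ifP; lia.
Qed.

Lemma nth_sublabels S i j : i < tsize S -> j < ssz S i ->
  nth 0 (sublabels S i) j = lab S (i + j).
Proof.
move=> hi hj; have [h1 _ _] := ssz_bounds hi.
rewrite /sublabels (nth_map node0) ?nth_take ?nth_drop //.
by rewrite size_take size_drop -/(nnodes S) nnodesE; case: ifP; lia.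
Qed.

Lemma cert_eq S i c : 0 < i < tsize S -> i <= c < i + ssz S i ->
  lab S c < dep S i -> (forall k, i <= k < c -> dep S i <= lab S k) -> cert S i = c.
Proof.
move=> hi hc hlt hge; rewrite /cert (@find_nth_eq _ 0 _ _ (c - i)); first lia.
- by rewrite size_sublabels //; lia.
- by rewrite nth_sublabels ?subnKC //; lia.
move=> j hj; rewrite nth_sublabels -?leqNgt; [apply: hge | |]; lia.
Qed.

Lemma Dw_arc_word S : Dw S = arc_word (cert S) 1 (tsize S).
Proof. by rewrite /Dw /arc_word /blocks /mcount /ccount nnodesE subn1. Qed.

Lemma ell_Ew S i : 0 < i < tsize S -> ell (Ew S) i = 2 * (ssz S i).-1.
Proof.
move=> /andP[i0 hi].
have [e [t' [_ /nth_take_pre h2 _ _ /(_ i0)[A [B [-> nA]]]]]] := subtree_at 0 hi.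
rewrite /ssz /nodesS h2 (_ : i = (nups A).+1); last lia.
by rewrite ell_cat ?balanced_Ew // size_balanced ?balanced_Ew // nups_Ew.
Qed.

Section Certificates.
Variable S : ltree.
Hypothesis st : sticky S.

Lemma certP i : 0 < i < tsize S ->
  [/\ i <= cert S i < i + ssz S i, lab S (cert S i) < dep S i &
      forall k, i <= k < cert S i -> dep S i <= lab S k].
Proof.
move=> hi; have [_ [has_lt _]] := st.
have /has_lt hh : 0 < i < nnodes S by rewrite nnodesE.
have hi' : i < tsize S by lia.
have hf : find (fun l => l < dep S i) (sublabels S i) < ssz S i.
  by rewrite -(size_sublabels hi') -has_find.
rewrite /cert; split=> [||k hk]; first lia.
  by have := nth_find 0 hh; rewrite nth_sublabels.
have /(@before_find _ 0 (fun l => l < dep S i)) :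
  k - i < find (fun l => l < dep S i) (sublabels S i) by lia.
rewrite nth_sublabels ?subnKC; [by move/negbT; rewrite -leqNgt | lia..].
Qed.

Lemma nested_map_cert : nested_map (cert S) 1 (tsize S).
Proof.
move=> i hi; have [/andP[c1 c2] c3 c4] := certP hi.
have hi' : i < tsize S by lia.
have [b1 _ _] := ssz_bounds hi'; split=> [|j hj]; first lia.
have /(subtree_nestedS hi')[l1 l2] : i < j < i + ssz S i by lia.
have /certP[/andP[d1 d2] d3 d4] : 0 < j < tsize S by lia.
have [h|h] := ltnP (cert S i) (j + ssz S j); last lia.
case: leqP => // h2; have /d4 : j <= cert S i < cert S j by lia.
lia.
Qed.

End Certificates.

Lemma sticky_before_cert S v w : sticky S -> 0 < v < tsize S ->
  v <= w < v + ssz S v -> lab S w = dep S v -> w < cert S v.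
Proof.
move=> st hv hw ev; have [_ [_ prefix_ge]] := st.
have [/andP[vc _] lab_cert _] := certP st hv.
have hv' : v < tsize S by lia.
have /(all_nthP 0) before_w : all (leq (dep S v)) (take (w - v) (sublabels S v)).
  apply: prefix_ge; first by rewrite nnodesE.
    by rewrite size_sublabels //; lia.
  by rewrite nth_sublabels ?subnKC //; lia.
have [//|cw|wc] := ltngtP w (cert S v); last by rewrite -wc ev ltnn in lab_cert.
have := before_w (cert S v - v); rewrite size_take size_sublabels // ifT; last lia.
by rewrite nth_take ?nth_sublabels ?subnKC; lia.
Qed.

(* For a sticky tree and [m = cert S] this is the label of [w] ([sticky_lab]). *)
Definition arc_label (S : ltree) (m : nat -> nat) (w : nat) : nat :=
  \max_(v <- iota 1 w | w < m v) dep S v.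

Lemma eq_arc_label S1 S2 m1 m2 w :
  (forall v, 0 < v <= w -> dep S1 v = dep S2 v /\ m1 v = m2 v) ->
  arc_label S1 m1 w = arc_label S2 m2 w.
Proof.
move=> e; rewrite /arc_label big_seq_cond [RHS]big_seq_cond.
apply: eq_big => [v|v /andP[]]; rewrite mem_iota.
  by case: (boolP (0 < v < 1 + w)) => //= hv; have /e[_ ->] : 0 < v <= w by lia.
by move=> hv _; have /e[] : 0 < v <= w by lia.
Qed.

Lemma sticky_lab S w : sticky S -> w < tsize S -> lab S w = arc_label S (cert S) w.
Proof.
move=> st hw; apply/eqP; rewrite eqn_leq; apply/andP; split; last first.
  apply/bigmax_leqP_seq => v; rewrite mem_iota => hv wc.
  have /(certP st)[_ _ ->] // : 0 < v < tsize S by lia.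
  lia.
have [->//|lab_pos] := posnP (lab S w).
have [lab_dep _] := st; have /lab_dep : w < nnodes S by rewrite nnodesE.
move=> /(ancestor_at_depthS hw)[v [hv ev]].
have v0 : 0 < v by case: (posnP v) ev => // ->; rewrite dep_root; lia.
rewrite -ev; apply: (leq_bigmax_seq v); first by rewrite mem_iota; lia.
by apply: (sticky_before_cert st) (esym ev) => //; lia.
Qed.

Lemma ell_Dw S i : sticky S -> 0 < i < tsize S -> ell (Dw S) i = 2 * (cert S i - i).
Proof.
by move=> st hi; rewrite Dw_arc_word ell_arc_word1 //; apply: nested_map_cert.
Qed.

Lemma Ew_dep S1 S2 : Ew S1 = Ew S2 -> dep S1 =1 dep S2.
Proof.
move=> e i; have := congr1 (nth 0 ^~ i) (Ew_pre_depths 0 e).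
have [hi|hi] := ltnP i (tsize S1).
  by rewrite !(nth_map node0) ?size_pre -?(tsize_Ew e).
by move=> _; rewrite /dep /nodesS !nth_default // size_pre -?(tsize_Ew e).
Qed.

Lemma pre_labels S : [seq x.1.2 | x <- pre 0 S] = [seq lab S w | w <- iota 0 (tsize S)].
Proof. by rewrite -[pre 0 S in LHS]take_size -(map_nth_iota0 node0) // -map_comp size_pre. Qed.

Lemma sticky_inj S1 S2 : sticky S1 -> sticky S2 ->
  Dw S1 = Dw S2 -> Ew S1 = Ew S2 -> S1 = S2.
Proof.
move=> st1 st2 eD eE; have edep := Ew_dep eE; have eN := tsize_Ew eE.
have ecert i : 0 < i < tsize S1 -> cert S1 i = cert S2 i.
  move=> hi; have := ell_Dw st1 hi; rewrite eD ell_Dw // -?eN //.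
  have [/andP[c1 _] _ _] := certP st1 hi.
  have /(certP st2)[/andP[c2 _] _ _] : 0 < i < tsize S2 by rewrite -eN.
  lia.
apply: (Ew_labels_inj (d := 0) eE); rewrite !pre_labels -eN.
apply/eq_in_map => w; rewrite mem_iota => hw; rewrite !sticky_lab -?eN //.
by apply: eq_arc_label => v hv; rewrite edep ecert //; lia.
Qed.

Lemma bigmax_seq_witness (s : seq nat) (P : pred nat) (G : nat -> nat) :
  0 < \max_(v <- s | P v) G v ->
  exists v, [/\ v \in s, P v & \max_(v <- s | P v) G v = G v].
Proof.
elim: s => [|x s IH]; first by rewrite big_nil.
rewrite big_cons; case: ifP => Px; last first.
  by move=> /IH[v [vs Pv ->]]; exists v; rewrite in_cons vs orbT.
have [_ _|_ /IH[v [vs Pv e]]] := leqP (\max_(j <- s | P j) G j) (G x).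
  by exists x; rewrite mem_head Px.
by exists v; rewrite in_cons vs orbT.
Qed.

Section ArcLabelledTree.
Variables (S : ltree) (m : nat -> nat).
Hypothesis nest : nested_map m 1 (tsize S).
Hypothesis m_in_subtree : forall i, 0 < i < tsize S -> m i < i + ssz S i.
Hypothesis labS : forall w, w < tsize S -> lab S w = arc_label S m w.

Lemma dep_lt_covered v i : 0 < v < i -> i < tsize S -> i <= m v -> dep S v < dep S i.
Proof.
move=> hv hi im; have /m_in_subtree mv : 0 < v < tsize S by lia.
have hv' : v < tsize S by lia.
by have /(subtree_nestedS hv')[] : v < i < v + ssz S v by lia.
Qed.

Lemma dep_le_lab v w : 0 < v <= w -> w < m v -> w < tsize S -> dep S v <= lab S w.
Proof.
by move=> hv wm hw; rewrite labS //; apply: (leq_bigmax_seq v); rewrite ?mem_iota //; lia.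
Qed.

Lemma lab_arc_end i : 0 < i < tsize S -> lab S (m i) < dep S i.
Proof.
move=> hi; have /nest[/andP[im mi] nest_i] : 1 <= i < tsize S by lia.
have hi' : i < tsize S by lia.
have [_ _ /(_ (proj1 (andP hi))) dep_pos] := ssz_bounds hi'.
rewrite labS // /arc_label.
suff : \max_(v <- iota 1 (m i) | m i < m v) dep S v <= (dep S i).-1 by lia.
apply/bigmax_leqP_seq => v; rewrite mem_iota => hv mv; have [vi|iv|ev] := ltngtP v i.
- have : dep S v < dep S i by apply: dep_lt_covered; lia.
  lia.
- have /nest_i : i < v <= m i by lia.
  lia.
- by rewrite ev ltnn in mv.
Qed.

Lemma arc_label_witness w : w < tsize S -> 0 < lab S w ->
  exists v, [/\ 0 < v <= w, w < m v & dep S v = lab S w].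
Proof.
move=> hw; rewrite labS // /arc_label => /bigmax_seq_witness[v [hv wm ->]].
by exists v; move: hv; rewrite mem_iota; split=> //; lia.
Qed.

Lemma cert_arc i : 0 < i < tsize S -> cert S i = m i.
Proof.
move=> hi; have /nest[/andP[im mi] _] : 1 <= i < tsize S by lia.
apply: cert_eq => //; first by have := m_in_subtree hi; lia.
  exact: lab_arc_end.
by move=> k hk; apply: dep_le_lab; lia.
Qed.

Lemma sticky_arc_labelled : sticky S.
Proof.
split; [|split] => i; rewrite nnodesE => hi.
- rewrite labS //; apply/bigmax_leqP_seq => v; rewrite mem_iota => hv iv.
  have [vi|<-//] : v < i \/ v = i by lia.
  by apply: ltnW; apply: dep_lt_covered; lia.
- have /nest[/andP[im mi] _] : 1 <= i < tsize S by move: hi; lia.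
  apply/(has_nthP 0); exists (m i - i).
    by rewrite size_sublabels; [have := m_in_subtree hi; lia | lia].
  rewrite nth_sublabels ?subnKC; [exact: lab_arc_end | lia | lia |].
  by have := m_in_subtree hi; lia.
move=> j; rewrite size_sublabels // => hj; rewrite nth_sublabels // => labj.
have [->|i0] := posnP i; first by apply/(all_nthP 0) => k _; rewrite dep_root.
have [_ _ /(_ i0) dep_pos] := ssz_bounds hi.
have hij : i + j < tsize S by have [] := ssz_bounds hi; lia.
have lab_pos : 0 < lab S (i + j) by rewrite labj.
have [v [hv jm ev]] := arc_label_witness hij lab_pos.
have /m_in_subtree mv : 0 < v < tsize S by lia.
have vi : v = i by apply: (@ancestor_uniq S v i (i + j)); lia.
subst v; apply/(all_nthP 0) => k; rewrite size_take size_sublabels // ifT; last lia.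
by move=> hk; rewrite nth_take // nth_sublabels; [apply: dep_le_lab | |]; lia.
Qed.

End ArcLabelledTree.

(** * The bijection *)

Lemma dyck_balanced n w : dyck n w -> balanced w.
Proof.
case/and3P=> /eqP s /eqP u p; rewrite /balanced p andbT.
by move: s; rewrite size_nups_ndowns u => s; apply/eqP; lia.
Qed.

Lemma balanced_dyck w : balanced w -> dyck (nups w) w.
Proof. by move=> b; rewrite /dyck eqxx (size_balanced b) eqxx; case/andP: b. Qed.

Lemma tsize_edges S n : edges S = n -> tsize S = n.+1.
Proof. by rewrite /edges => <-; rewrite prednK // tsize_gt0. Qed.

Lemma Ew_surj w : balanced w -> exists t, Ew t = w.
Proof.
move=> bw; suff [ts <-] : exists ts, Ew_forest ts = w by exists (LNode 0 ts).
move: w bw; apply: (balanced_ind (P := fun w => exists ts, Ew_forest ts = w)).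
  by exists [::].
move=> X Y _ _ [ts1 <-] [ts2 <-].
by exists (LNode 0 ts1 :: ts2); rewrite Ew_forest_cons.
Qed.

Lemma sticky_tamari_interval n S : sticky S -> edges S = n ->
  [/\ dyck n (Dw S), dyck n (Ew S) & tamari_le n (Dw S) (Ew S)].
Proof.
move=> st eS; have hN := tsize_edges eS; split.
- have -> : n = nups (Dw S) by rewrite Dw_arc_word nups_arc_word hN subn1.
  by apply: balanced_dyck; rewrite Dw_arc_word; apply/arc_word_balanced/nested_map_cert.
- by rewrite -eS -nups_Ew; apply/balanced_dyck/balanced_Ew.
move=> i hi; have hi' : 0 < i < tsize S by lia.
rewrite ell_Dw // ell_Ew //; have [/andP[c1 c2] _ _] := certP st hi'; lia.
Qed.

Lemma tamari_interval_sticky n P Q : dyck n P -> dyck n Q -> tamari_le n P Q ->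
  exists S, [/\ sticky S, edges S = n, Dw S = P & Ew S = Q].
Proof.
move=> dP dQ tam; have [T eT] := Ew_surj (dyck_balanced dQ).
have nP : nups P = n by case/and3P: dP => _ /eqP.
have hT : tsize T = n.+1.
  by apply: tsize_edges; rewrite -nups_Ew eT; case/and3P: dQ => _ /eqP.
have [m [nest eP]] := balanced_arc_word (dyck_balanced dP) 1; rewrite nP add1n in nest eP.
have [S [eS sS labS]] := relabel T 0 (arc_label T m).
have edep := Ew_dep eS; rewrite hT in labS; rewrite eT in eS.
have hS : tsize S = n.+1 by rewrite sS.
rewrite -hS in nest; have m_in_subtree i : 0 < i < tsize S -> m i < i + ssz S i.
  move=> hi; have /tam : 1 <= i <= n by lia.
  rewrite eP -eS ell_Ew // -hS ell_arc_word1 //.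
  have /ssz_bounds[_ ssz_pos _] : i < tsize S by lia.
  lia.
have labA w : w < tsize S -> lab S w = arc_label S m w.
  by move=> hw; rewrite /lab labS -?hS //; apply: eq_arc_label => v _; rewrite edep.
exists S; split=> //.
- exact: sticky_arc_labelled m_in_subtree labA.
- by rewrite /edges hS.
- have ecert := cert_arc nest m_in_subtree labA.
  by rewrite Dw_arc_word eP hS; apply: eq_arc_word => i hi; rewrite ecert //; lia.
Qed.

Theorem mainTheorem11 (n : nat) (hn : 1 <= n) :
  (forall S : ltree, sticky S -> edges S = n ->
     [/\ dyck n (Dw S), dyck n (Ew S) & tamari_le n (Dw S) (Ew S)]) /\
  (forall S1 S2 : ltree, sticky S1 -> sticky S2 -> edges S1 = n -> edges S2 = n ->
     Dw S1 = Dw S2 -> Ew S1 = Ew S2 -> S1 = S2) /\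
  (forall P Q : seq bool, dyck n P -> dyck n Q -> tamari_le n P Q ->
     exists S : ltree, [/\ sticky S, edges S = n, Dw S = P & Ew S = Q]).
Proof.
split; [|split].
- by move=> S; apply: sticky_tamari_interval.
- by move=> S1 S2 st1 st2 _ _; apply: sticky_inj.
- by move=> P Q; apply: tamari_interval_sticky.
Qed.
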